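(* Let $L$ be an $n\times n$ nonsingular M-matrix with integer entries, and let $\phi_1,\dots,\phi_n:\mathbb{R}\to\mathbb{R}$ be non-negative strictly increasing functions. Define $E_\phi(q)=\sum_{i=1}^n\phi_i((L^{-1}q)_i)$ for $q\in\mathbb{Z}^n$. For every $f\in\mathbb{Z}^n$ with $f\ge0$, the problem $\min_{g\sim f,\ g\ge0}E_\phi(g)$ (over $g\in\mathbb{Z}^n$) has a unique solution.
   Context: A Z-matrix is a square real matrix whose off-diagonal entries are all $\le 0$. A nonsingular M-matrix is a Z-matrix $L$ that is invertible with $L^{-1}$ having all entries nonnegative. Vector inequalities are entrywise. For $f,g\in\mathbb{Z}^n$, $f\sim g$ means $g-f=Lz$ for some $z\in\mathbb{Z}^n$. *)

From HB Require Import structures.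
From mathcomp Require Import all_boot all_order all_algebra.
Set Implicit Arguments. Unset Strict Implicit. Unset Printing Implicit Defensive.
Import Order.TTheory GRing.Theory Num.Theory.
Local Open Scope ring_scope.

Definition Zmatrix (R : numDomainType) (n : nat) (L : 'M[R]_n) : Prop :=
  forall i j : 'I_n, i != j -> L i j <= 0.

Definition nonsingular_Mmatrix (R : numFieldType) (n : nat) (L : 'M[R]_n) : Prop :=
  [/\ Zmatrix L, L \in unitmx & forall i j : 'I_n, 0 <= invmx L i j].

Definition mx_intr (R : numFieldType) (m n : nat) (A : 'M[int]_(m, n)) : 'M[R]_(m, n) :=
  map_mx (fun z : int => z%:~R) A.

Definition lat_equiv (n : nat) (L : 'M[int]_n) (f g : 'cV[int]_n) : Prop :=
  exists z : 'cV[int]_n, g - f = L *m z.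

Definition vnonneg (n : nat) (g : 'cV[int]_n) : Prop :=
  forall i : 'I_n, 0 <= g i 0.

Definition Ephi (R : numFieldType) (n : nat) (L : 'M[int]_n)
  (phi : 'I_n -> R -> R) (q : 'cV[int]_n) : R :=
  \sum_(i < n) phi i ((invmx (mx_intr R L) *m mx_intr R q) i 0).

From HB Require Import structures.
From mathcomp Require Import all_boot all_order all_algebra.
From mathcomp Require Import zify.
From Stdlib Require Import Classical.

Set Implicit Arguments.
Unset Strict Implicit.
Unset Printing Implicit Defensive.

Import Order.TTheory GRing.Theory Num.Theory.
Local Open Scope ring_scope.

(* Write the competitors as g = f + L z.  Since L^-1 g = L^-1 f + z, the
   energy is a sum of strictly increasing functions of the coordinates of z,
   and nonnegativity of L^-1 bounds the feasible z from below.  Because L is a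
   Z-matrix, the feasible z are closed under coordinatewise minimum, so there
   is a least feasible z0; it strictly beats every other feasible z. *)

Section LeastElement.

Variables (n : nat) (P : 'cV[int]_n -> Prop) (c : 'I_n -> int).
Hypothesis P_min : forall y z, P y -> P z -> P (map2_mx Order.min y z).
Hypothesis P_lb : forall z, P z -> forall i, c i <= z i 0.

Lemma min_closed_least z :
  P z -> exists2 z0, P z0 & forall y, P y -> forall i, z0 i 0 <= y i 0.
Proof.
pose mu (y : 'cV[int]_n) := \sum_i (y i 0 - c i).
have mu_ge0 y : P y -> 0 <= mu y.
  by move=> Py; apply: sumr_ge0 => i _; rewrite subr_ge0 P_lb.
move=> Pz; have [k] := ubnP (absz (mu z)); elim: k z Pz => // k IH z Pz lt_mu.
have [z_least|] := classic (forall y, P y -> forall i, z i 0 <= y i 0).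
  by exists z.
move=> /not_all_ex_not[y /not_all_ex_not[Py /not_all_ex_not[i /negP]]].
rewrite -ltNge => lt_yz.
pose m := map2_mx Order.min z y.
have Pm : P m by exact: P_min.
have lt_mu_m : mu m < mu z.
  rewrite -subr_gt0 /mu -sumrB (bigD1 i) //= -[0]addr0.
  apply: ltr_leD; first by rewrite !mxE min_r ?ltW // opprB addrA subrK subr_gt0.
  by apply: sumr_ge0 => j _; rewrite !mxE opprB addrA subrK subr_ge0 ge_min lexx.
apply: (IH m Pm).
by have := mu_ge0 _ Pm; have := mu_ge0 _ Pz; move: lt_mu lt_mu_m; lia.
Qed.

End LeastElement.

Lemma Zmatrix_intr (R : numFieldType) n (L : 'M[int]_n) :
  Zmatrix (mx_intr R L) -> Zmatrix L.
Proof. by move=> hZ i j /hZ; rewrite mxE lerz0. Qed.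

Lemma lat_equivP n (L : 'M[int]_n) f h :
  lat_equiv L f h <-> exists z, h = f + L *m z.
Proof.
split=> [[z hz]|[z ->]]; exists z; last by rewrite addrC addKr.
by rewrite -hz addrC subrK.
Qed.

Section Feasibility.

Variables (n : nat) (L : 'M[int]_n) (f : 'cV[int]_n).
Hypothesis L_Z : Zmatrix L.

Lemma Zmatrix_mulmx_le (x y : 'cV[int]_n) i :
  (forall j, y j 0 <= x j 0) -> y i 0 = x i 0 -> (L *m x) i 0 <= (L *m y) i 0.
Proof.
move=> le_yx eq_yx; rewrite !mxE; apply: ler_sum => j _.
have [<-|neq_ij] := eqVneq i j; first by rewrite eq_yx.
by apply: ler_wnM2l; [exact: L_Z | exact: le_yx].
Qed.

Lemma Zmatrix_feasible_min y z :
  vnonneg (f + L *m y) -> vnonneg (f + L *m z) ->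
  vnonneg (f + L *m map2_mx Order.min y z).
Proof.
move=> hy hz i; pose m := map2_mx Order.min y z.
have le_my j : m j 0 <= y j 0 by rewrite mxE ge_min lexx.
have le_mz j : m j 0 <= z j 0 by rewrite mxE ge_min lexx orbT.
rewrite mxE; case: (leP (y i 0) (z i 0)) => [le_yz|lt_zy].
- apply: le_trans (hy i) _; rewrite mxE lerD2l.
  by apply: Zmatrix_mulmx_le => //; rewrite mxE min_l.
- apply: le_trans (hz i) _; rewrite mxE lerD2l.
  by apply: Zmatrix_mulmx_le => //; rewrite mxE min_r // ltW.
Qed.

End Feasibility.

Section InverseCoordinates.

Variables (R : realFieldType) (n : nat) (L : 'M[int]_n).
Hypothesis L_unit : mx_intr R L \in unitmx.
Hypothesis invmx_ge0 : forall i j, 0 <= invmx (mx_intr R L) i j.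

Lemma invmx_intr_shift (f z : 'cV[int]_n) :
  invmx (mx_intr R L) *m mx_intr R (f + L *m z) =
  invmx (mx_intr R L) *m mx_intr R f + mx_intr R z.
Proof. by rewrite /mx_intr map_mxD map_mxM mulmxDr mulmxA mulVmx // mul1mx. Qed.

(* The bound is integral because |det L| >= 1; R need not be archimedean. *)
Lemma invmx_intr_bound (f : 'cV[int]_n) i :
  `|(invmx (mx_intr R L) *m mx_intr R f) i 0| <= `|(\adj L *m f) i 0|%:~R.
Proof.
have det_neq0 : (\det L)%:~R != 0 :> R.
  by move: L_unit; rewrite unitmxE unitfE /mx_intr det_map_mx.
rewrite /invmx L_unit -scalemxAl mxE /mx_intr -map_mx_adj -map_mxM mxE.
rewrite det_map_mx /= normrM normfV mulrC ler_pdivrMr ?normr_gt0 // intr_norm.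
apply: ler_peMr => //; rewrite -intr_norm ler1z.
by move: det_neq0; rewrite intr_eq0; lia.
Qed.

Lemma feasible_lower_bound (f z : 'cV[int]_n) :
  vnonneg (f + L *m z) -> forall i, - `|(\adj L *m f) i 0| <= z i 0.
Proof.
move=> hz i.
have : 0 <= (invmx (mx_intr R L) *m mx_intr R (f + L *m z)) i 0.
  by rewrite mxE; apply: sumr_ge0 => j _; rewrite mulr_ge0 ?invmx_ge0 // mxE ler0z.
rewrite invmx_intr_shift mxE [mx_intr R z i 0]mxE -lerBlDl sub0r => le_z.
rewrite -(ler_int R) mulrNz; apply: le_trans le_z; rewrite lerN2.
exact: le_trans (ler_norm _) (invmx_intr_bound f i).
Qed.

End InverseCoordinates.

Section Energy.

Variables (R : realFieldType) (n : nat) (L : 'M[int]_n) (f : 'cV[int]_n).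
Variable phi : 'I_n -> R -> R.
Hypothesis L_unit : mx_intr R L \in unitmx.
Hypothesis phi_incr : forall i, {homo phi i : x y / x < y}.

Let x0 := invmx (mx_intr R L) *m mx_intr R f.

Lemma Ephi_shift (z : 'cV[int]_n) :
  Ephi L phi (f + L *m z) = \sum_i phi i (x0 i 0 + (z i 0)%:~R).
Proof.
apply: eq_bigr => i _.
by rewrite invmx_intr_shift // [in LHS]mxE [mx_intr R z i 0]mxE.
Qed.

Lemma Ephi_shift_le (y z : 'cV[int]_n) :
  (forall i, y i 0 <= z i 0) -> Ephi L phi (f + L *m y) <= Ephi L phi (f + L *m z).
Proof.
move=> le_yz; rewrite !Ephi_shift; apply: ler_sum => i _.
by apply: ltW_homo (phi_incr i) _ _ _; rewrite lerD2l ler_int.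
Qed.

Lemma Ephi_shift_lt (y z : 'cV[int]_n) i :
  (forall j, y j 0 <= z j 0) -> y i 0 < z i 0 ->
  Ephi L phi (f + L *m y) < Ephi L phi (f + L *m z).
Proof.
move=> le_yz lt_yz; rewrite !Ephi_shift (bigD1 i) //= [X in _ < X](bigD1 i) //=.
apply: ltr_leD; first by apply: phi_incr; rewrite ltrD2l ltr_int.
apply: ler_sum => j _.
by apply: ltW_homo (phi_incr j) _ _ _; rewrite lerD2l ler_int.
Qed.

End Energy.

Theorem mainTheorem14 (R : realFieldType) (n : nat) (L : 'M[int]_n)
  (phi : 'I_n -> R -> R)
  (hL : nonsingular_Mmatrix (mx_intr R L))
  (hphi_nonneg : forall (i : 'I_n) (x : R), 0 <= phi i x)
  (hphi_incr : forall (i : 'I_n) (x y : R), x < y -> phi i x < phi i y)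
  (f : 'cV[int]_n) (hf : vnonneg f) :
  exists! g : 'cV[int]_n,
    (lat_equiv L f g /\ vnonneg g) /\
    (forall h : 'cV[int]_n, lat_equiv L f h -> vnonneg h ->
       Ephi L phi g <= Ephi L phi h).
Proof.
case: hL => /Zmatrix_intr L_Z L_unit inv_ge0.
have f_feasible : vnonneg (f + L *m 0) by rewrite mulmx0 addr0.
have [z0 z0_feasible z0_least] :=
  min_closed_least (P := fun z => vnonneg (f + L *m z))
    (Zmatrix_feasible_min L_Z) (feasible_lower_bound L_unit inv_ge0 (f := f)) f_feasible.
have z0_equiv : lat_equiv L f (f + L *m z0) by apply/lat_equivP; exists z0.
exists (f + L *m z0); split.
  split=> // _ /lat_equivP[z ->] hz.
  exact: (Ephi_shift_le f L_unit hphi_incr) (z0_least z hz).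
move=> _ [[/lat_equivP[z ->] hz] z_min]; congr (f + L *m _).
apply/matrixP => i j; rewrite (ord1 j); apply/eqP.
rewrite eq_le z0_least //= leNgt; apply/negP => lt_z0z.
move: (z_min _ z0_equiv z0_feasible); apply/negP; rewrite -ltNge.
exact: (Ephi_shift_lt f L_unit hphi_incr) (z0_least z hz) lt_z0z.
Qed.
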